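(* Let $S$ be an ideal extension of a semigroup $T$ by a semigroup $U$, i.e. $T$ is isomorphic to an ideal $T'$ of $S$ and the Rees quotient $S/T'$ is isomorphic to $U$. If $T$ and $U$ are both defined by finite complete rewriting systems, then $S$ is also defined by a finite complete rewriting system.
   Context: For an ideal $I$ of a semigroup $S$, the Rees quotient $S/I$ is the quotient of $S$ by the congruence $\rho_I$ where $s\,\rho_I\, t$ iff $s=t$ or $s,t\in I$. A rewriting system $\langle X\mid R\rangle$ consists of an alphabet $X$ and rules $u\to v$ with $u,v\in X^+$; it is finite if $X,R$ are finite. One-step reduction: $w_1uw_2\to_R w_1vw_2$ for $(u\to v)\in R$; $\to_R^*$ is its reflexive transitive closure. It is noetherian if there is no infinite chain $w_1\to_R w_2\to_R\cdots$, confluent if $u\to_R^*v$, $u\to_R^*v'$ imply a common $w$ with $v\to_R^*w$, $v'\to_R^*w$, and complete if both. A semigroup is defined by $\langle X\mid R\rangle$ if it is isomorphic to $X^+$ modulo the congruence generated by $R$. *)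

From Stdlib Require List.
From mathcomp Require Import all_boot.
Set Implicit Arguments. Unset Strict Implicit. Unset Printing Implicit Defensive.

Record semigroup := Semigroup {
  sg_car :> Type;
  sg_op : sg_car -> sg_car -> sg_car;
  sg_assoc : forall x y z, sg_op x (sg_op y z) = sg_op (sg_op x y) z }.

Definition sg_hom (A B : semigroup) (f : A -> B) : Prop :=
  forall x y, f (sg_op x y) = sg_op (f x) (f y).

Definition congruence (A : semigroup) (r : A -> A -> Prop) : Prop :=
  (forall x, r x x) /\ (forall x y, r x y -> r y x) /\
  (forall x y z, r x y -> r y z -> r x z) /\
  (forall x y z, r x y -> r (sg_op z x) (sg_op z y) /\ r (sg_op x z) (sg_op y z)).

(** [A] is isomorphic to the quotient [B / r] (r a congruence on B):
    there is a surjective homomorphism [B -> A] whose kernel is exactly [r]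
    (the induced map B/r -> A is then an isomorphism). *)
Definition iso_quotient (A B : semigroup) (r : B -> B -> Prop) : Prop :=
  exists f : B -> A, sg_hom f /\ (forall a, exists b, f b = a) /\
    (forall b b', f b = f b' <-> r b b').

Definition is_ideal (S : semigroup) (I : S -> Prop) : Prop :=
  (exists t, I t) /\ forall s t, I t -> I (sg_op s t) /\ I (sg_op t s).

Definition rees_cong (S : semigroup) (I : S -> Prop) (s t : S) : Prop :=
  s = t \/ (I s /\ I t).

Definition ideal_extension (S T U : semigroup) : Prop :=
  exists I : S -> Prop, is_ideal I /\
    (exists g : T -> S, sg_hom g /\ injective g /\
        (forall s, I s <-> exists t, g t = s)) /\
    iso_quotient U (rees_cong I).

(** The free semigroup X^+: nonempty words, represented as (first letter, rest). *)
Definition word (X : Type) := (X * seq X)%type.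
Definition wd (X : Type) (w : word X) : seq X := w.1 :: w.2.
Definition wcat (X : Type) (a b : word X) : word X := (a.1, a.2 ++ wd b).

Lemma wcat_assoc (X : Type) (a b c : word X) :
  wcat a (wcat b c) = wcat (wcat a b) c.
Proof. by case: a => x s; case: b => y t; case: c => z u; rewrite /wcat /wd /= -catA. Qed.

Definition free_sg (X : Type) : semigroup := Semigroup (@wcat_assoc X).

Definition rules (X : Type) := seq (word X * word X).

Definition step (X : Type) (R : rules X) (a b : word X) : Prop :=
  exists (w1 w2 : seq X) (u v : word X), List.In (u, v) R /\
    wd a = w1 ++ wd u ++ w2 /\ wd b = w1 ++ wd v ++ w2.

Inductive star (A : Type) (r : A -> A -> Prop) : A -> A -> Prop :=
  | star_refl x : star r x x
  | star_step x y z : r x y -> star r y z -> star r x z.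

Definition noetherian (X : Type) (R : rules X) : Prop :=
  ~ exists f : nat -> word X, forall n, step R (f n) (f n.+1).

Definition confluent (X : Type) (R : rules X) : Prop :=
  forall u v v', star (step R) u v -> star (step R) u v' ->
    exists w, star (step R) v w /\ star (step R) v' w.

Definition complete (X : Type) (R : rules X) : Prop :=
  noetherian R /\ confluent R.

Definition gen_cong (X : Type) (R : rules X) (a b : free_sg X) : Prop :=
  forall r : free_sg X -> free_sg X -> Prop, congruence r ->
    (forall u v, List.In (u, v) R -> r u v) -> r a b.

Definition defines (S : semigroup) (X : Type) (R : rules X) : Prop :=
  iso_quotient S (@gen_cong X R).

Definition fcrs_defined (S : semigroup) : Prop :=
  exists (X : finType) (R : rules X), complete R /\ defines S R.

From Stdlib Require Import Classical ClassicalEpsilon FunctionalExtensionality Lia.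
From mathcomp Require Import all_boot zify.
Set Implicit Arguments. Unset Strict Implicit. Unset Printing Implicit Defensive.

(* Take the alphabet [X + Y], where [X] presents [T] (embedded as the ideal) and [Y]
   presents [U].  Keep the rules of [T]; keep the rules of [U], except that a rule whose
   left side evaluates into the ideal is redirected to an [X]-word for that element; do
   the same for the normal form of the zero of [U]; and redirect every mixed two-letter
   word [x y] or [y x] to an [X]-word.  Irreducible words are then either [RT]-normal
   [X]-words or [RU]-normal [Y]-words outside the ideal, and evaluation is injective on
   both kinds, so normal forms are unique.  Each rule either rewrites the [X]-letters by
   [RT] leaving the maximal [Y]-blocks alone, or replaces one [Y]-block by finitely many
   smaller ones (an [RU]-rewrite or proper factors); so the multiset of blocks, then the
   [X]-projection, decreases and the system terminates. *)

Definition SN (A : Type) (r : A -> A -> Prop) : A -> Prop := Acc (fun b a => r a b).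

Lemma star_trans (A : Type) (r : A -> A -> Prop) x y z :
  star r x y -> star r y z -> star r x z.
Proof. by elim=> // x0 y0 z0 Hxy _ IH /IH; apply: star_step. Qed.

Lemma In_mem (A : eqType) (x : A) s : x \in s -> List.In x s.
Proof. by elim: s => //= a s IH; rewrite in_cons => /orP [/eqP ->|/IH]; [left|right]. Qed.

Lemma wd_wcat (X : Type) (a b : word X) : wd (wcat a b) = wd a ++ wd b.
Proof. by case: a. Qed.

Lemma wd_inj (X : Type) : injective (@wd X).
Proof. by case=> x s [y t] [-> ->]. Qed.

Section Rewriting.
Variables (X : Type) (R : rules X).

Definition irreducible (w : word X) : Prop := forall w', ~ step R w w'.

Definition seq_step (a b : seq X) : Prop :=
  exists (w1 w2 : seq X) (u v : word X), List.In (u, v) R /\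
    a = w1 ++ wd u ++ w2 /\ b = w1 ++ wd v ++ w2.

Lemma seq_step_ctx s t a b : seq_step a b -> seq_step (s ++ a ++ t) (s ++ b ++ t).
Proof.
case=> w1 [w2 [u [v [Huv [-> ->]]]]]; exists (s ++ w1), (w2 ++ t), u, v.
by rewrite -!catA.
Qed.

Lemma seq_step_rule u v : List.In (u, v) R -> seq_step (wd u) (wd v).
Proof. by move=> Huv; exists [::], [::], u, v; rewrite !cats0. Qed.

Lemma not_irreducible_factor a w1 w2 l r :
  List.In (l, r) R -> wd a = w1 ++ wd l ++ w2 -> ~ irreducible a.
Proof.
move=> Hlr Ea Ha.
pose b : word X := if w1 is z :: w1' then (z, w1' ++ wd r ++ w2) else (r.1, r.2 ++ w2).
apply: (Ha b); exists w1, w2, l, r; do 2!split => //.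
by rewrite /b; case: (w1); case: (r).
Qed.

Lemma step_wcatl z a b : step R a b -> step R (wcat z a) (wcat z b).
Proof.
case=> w1 [w2 [u [v [Huv [Ea Eb]]]]]; exists (wd z ++ w1), w2, u, v.
by rewrite !wd_wcat Ea Eb !catA.
Qed.

Lemma step_wcatr z a b : step R a b -> step R (wcat a z) (wcat b z).
Proof.
case=> w1 [w2 [u [v [Huv [Ea Eb]]]]]; exists w1, (w2 ++ wd z), u, v.
by rewrite !wd_wcat Ea Eb -!catA.
Qed.

Lemma star_homo (F : word X -> word X) :
  (forall a b, step R a b -> step R (F a) (F b)) ->
  forall a b, star (step R) a b -> star (step R) (F a) (F b).
Proof. by move=> HF a b; elim=> [x|x y z /HF Hxy _]; [apply: star_refl|apply: star_step]. Qed.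

Definition joinable (a b : free_sg X) : Prop :=
  exists c, star (step R) a c /\ star (step R) b c.

Lemma joinable_congruence : confluent R -> congruence joinable.
Proof.
move=> HR; split; [|split; [|split]].
- by move=> x; exists x; split; apply: star_refl.
- by move=> x y [c [Hx Hy]]; exists c.
- move=> x y z [p [Hxp Hyp]] [q [Hyq Hzq]].
  have [c [Hpc Hqc]] := HR _ _ _ Hyp Hyq.
  by exists c; split; [apply: star_trans Hpc|apply: star_trans Hqc].
- move=> x y z [c [Hx Hy]]; split.
  + by exists (wcat z c); split; apply: star_homo => //; apply: step_wcatl.
  + by exists (wcat c z); split; apply: (star_homo (F := fun w => wcat w z)) => //; apply: step_wcatr.
Qed.

Lemma star_irreducible a b : star (step R) a b -> irreducible a -> a = b.
Proof. by case=> // x y z Hxy _ /(_ y). Qed.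

Lemma confluent_irreducible_eq a b :
  confluent R -> gen_cong R a b -> irreducible a -> irreducible b -> a = b.
Proof.
move=> HR Hab Ha Hb.
have [c [Hac Hbc]] : joinable a b.
  apply: Hab; first exact: joinable_congruence.
  move=> u v Huv; exists v; split; last exact: star_refl.
  by apply: star_step (star_refl _ _); exists [::], [::], u, v; rewrite !cats0.
by rewrite (star_irreducible Hac Ha) (star_irreducible Hbc Hb).
Qed.

Lemma gen_cong_refl a : gen_cong R a a.
Proof. by move=> r [Hr _]. Qed.

Lemma gen_cong_sym a b : gen_cong R a b -> gen_cong R b a.
Proof. by move=> Hab r Hr HR; apply: Hr.2.1; apply: Hab. Qed.

Lemma gen_cong_trans a b c : gen_cong R a b -> gen_cong R b c -> gen_cong R a c.
Proof. by move=> Hab Hbc r Hr HR; apply: Hr.2.2.1 (Hab r Hr HR) (Hbc r Hr HR). Qed.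

Definition prepend (s : seq X) (a : word X) : word X :=
  if s is z :: s' then (z, s' ++ wd a) else a.

Definition append (a : word X) (s : seq X) : word X := (a.1, a.2 ++ s).

Lemma congruence_prepend (r : free_sg X -> free_sg X -> Prop) s a b :
  congruence r -> r a b -> r (prepend s a) (prepend s b).
Proof.
move=> Hr Hab; elim: s => // z s IH.
have E c : prepend (z :: s) c = wcat (z, [::]) (prepend s c).
  by case: s {IH} => //= y s; rewrite /wcat /= -catA.
by rewrite !E; case: (Hr.2.2.2 _ _ (z, [::]) IH).
Qed.

Lemma congruence_append (r : free_sg X -> free_sg X -> Prop) a b s :
  congruence r -> r a b -> r (append a s) (append b s).
Proof.
move=> Hr Hab; elim/last_ind: s => [|s z IH].
  by rewrite /append !cats0 -!surjective_pairing.
have E c : append c (rcons s z) = wcat (append c s) (z, [::]).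
  by rewrite /append /wcat /= -cats1 catA.
by rewrite !E; case: (Hr.2.2.2 _ _ (z, [::]) IH).
Qed.

Lemma wd_prepend s a : wd (prepend s a) = s ++ wd a.
Proof. by case: s. Qed.

Lemma wd_append a s : wd (append a s) = wd a ++ s.
Proof. by case: a. Qed.

Lemma step_gen_cong a b : step R a b -> gen_cong R a b.
Proof.
case=> w1 [w2 [u [v [Huv [Ea Eb]]]]] r Hr HR.
have -> : a = prepend w1 (append u w2) by apply: wd_inj; rewrite wd_prepend wd_append ?Ea ?Eb.
have -> : b = prepend w1 (append v w2) by apply: wd_inj; rewrite wd_prepend wd_append ?Ea ?Eb.
by apply: congruence_prepend => //; apply: congruence_append => //; apply: HR.
Qed.

Lemma gen_cong_rule u v : List.In (u, v) R -> gen_cong R u v.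
Proof. by move=> Huv r _; apply. Qed.

Lemma star_gen_cong a b : star (step R) a b -> gen_cong R a b.
Proof.
elim=> [x|x y z /step_gen_cong Hxy _]; [exact: gen_cong_refl|exact: gen_cong_trans].
Qed.

Lemma gen_cong_sound (A : semigroup) (e : free_sg X -> A) :
  sg_hom e -> (forall l r, List.In (l, r) R -> e l = e r) ->
  forall a b, gen_cong R a b -> e a = e b.
Proof.
move=> He HR a b Hab; apply: (Hab (fun a b => e a = e b)); last exact: HR.
do 3!split=> //; first by move=> x y z -> ->.
by move=> x y z Exy; rewrite !He Exy.
Qed.

Lemma SN_normal_form w : SN (step R) w -> exists n, star (step R) w n /\ irreducible n.
Proof.
elim=> {}w _ IH; case: (classic (exists w', step R w w')) => [[w' Hw]|Hw].
  by have [n [Hn Ni]] := IH _ Hw; exists n; split; first exact: star_step Hw Hn.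
by exists w; split; [exact: star_refl|move=> w' Hw'; apply: Hw; exists w'].
Qed.

Lemma SN_noetherian : (forall w, SN (step R) w) -> noetherian R.
Proof.
move=> HS [F HF].
suff: forall w, SN (step R) w -> forall n, F n <> w by move/(_ _ (HS (F 0)) 0).
move=> w; elim=> {}w _ IH n En; apply: (IH (F n.+1)) (erefl _).
by rewrite -En.
Qed.

Lemma noetherian_SN : noetherian R -> forall w, SN (step R) w.
Proof.
move=> HN w0; apply: NNPP => Hw0.
have next (w : {w | ~ SN (step R) w}) :
    {w' : {w | ~ SN (step R) w} | step R (sval w) (sval w')}.
  case: w => w Hw /=; apply: constructive_indefinite_description.
  apply: NNPP => Hn; apply: (Hw); constructor => w' Hww'.
  by apply: NNPP => Hw'; apply: Hn; exists (exist _ w' Hw').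
pose F := fix F n := if n is n'.+1 then sval (next (F n')) else exist _ w0 Hw0.
by apply: HN; exists (fun n => sval (F n)) => n; apply: (svalP (next (F n))).
Qed.

Lemma SN_seq_step : (forall w, SN (step R) w) -> forall s, SN seq_step s.
Proof.
move=> HS [|z s]; first by constructor=> b [[|? ?] [w2 [u [v [_ []]]]]].
suff H w : SN (step R) w -> SN seq_step (wd w) by exact: (H (z, s)).
elim=> {}w _ IH; constructor=> b Hb; case: (Hb) => [w1 [w2 [u [v [_ [_ Eb]]]]]].
have [z' [s' Eb']] : exists z' s', b = z' :: s'.
  by case: w1 Eb => [|y w1] ->; [case: v => y t; exists y, (t ++ w2)|exists y, (w1 ++ wd v ++ w2)].
by rewrite Eb'; apply: (IH (z', s')); rewrite /step -[wd (z', s')]/(z' :: s') -Eb'.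
Qed.

Lemma complete_defines (A : semigroup) (e : free_sg X -> A) :
  sg_hom e -> (forall a, exists w, e w = a) ->
  (forall l r, List.In (l, r) R -> e l = e r) ->
  (forall w, SN (step R) w) ->
  (forall n n', irreducible n -> irreducible n' -> e n = e n' -> n = n') ->
  complete R /\ defines A R.
Proof.
move=> He e_surj HR HS e_inj.
have e_star a b : star (step R) a b -> e a = e b.
  by move/star_gen_cong; apply: gen_cong_sound.
have nf_eq a b : e a = e b -> exists n, star (step R) a n /\ star (step R) b n.
  move=> Eab; have [n [Han Hn]] := SN_normal_form (HS a).
  have [n' [Hbn' Hn']] := SN_normal_form (HS b).
  exists n; split=> //; suff -> : n = n' by [].
  by apply: e_inj => //; rewrite -(e_star _ _ Han) -(e_star _ _ Hbn').
split; first split.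
- exact: SN_noetherian.
- by move=> u v v' /e_star Euv /e_star Euv'; apply: nf_eq; rewrite -Euv.
exists e; do 2!split=> //; move=> a b; split; last exact: gen_cong_sound.
case/nf_eq=> n [/star_gen_cong Han /star_gen_cong Hbn].
exact: gen_cong_trans Han (gen_cong_sym Hbn).
Qed.

End Rewriting.

Section Subfactor.
Variables (Y : Type) (R : rules Y).

Definition step_or_subfactor (b c : seq Y) : Prop :=
  seq_step R b c \/ exists s t, b = s ++ c ++ t /\ 0 < size (s ++ t).

(* Induction on the ambient word [s ++ p ++ t] under [seq_step], then on [size p]:
   rewriting [p] rewrites the ambient word, and a proper factor of [p] is shorter. *)
Lemma SN_step_or_subfactor : (forall b, SN (seq_step R) b) -> forall b, SN step_or_subfactor b.
Proof.
move=> HS b.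
suff H b' : SN (seq_step R) b' -> forall s p t, b' = s ++ p ++ t -> SN step_or_subfactor p.
  by apply: (H b (HS b) [::] b [::]); rewrite cats0.
elim=> {}b' _ IH.
suff H n s p t : size p <= n -> b' = s ++ p ++ t -> SN step_or_subfactor p.
  by move=> s p t; apply: (H (size p)).
elim: n s p t => [|n IHn] s p t Hp Eb; constructor=> c [Hc|[s' [t' [Ep Hst]]]].
- by apply: (IH (s ++ c ++ t) _ s c t erefl); rewrite Eb; apply: seq_step_ctx.
- by move: Hp Hst; rewrite Ep !size_cat; lia.
- by apply: (IH (s ++ c ++ t) _ s c t erefl); rewrite Eb; apply: seq_step_ctx.
- apply: (IHn (s ++ s') c (t' ++ t)); last by rewrite Eb Ep -!catA.
  by move: Hp Hst; rewrite Ep !size_cat; lia.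
Qed.

End Subfactor.

Section MultisetExtension.
Variables (A : Type) (e : A -> A -> Prop).

Definition mult_step (l l' : seq A) : Prop :=
  exists l1 b l2 C, l = l1 ++ b :: l2 /\ l' = l1 ++ C ++ l2 /\ forall c, List.In c C -> e b c.

Lemma SN_mult_step : (forall b, SN e b) -> forall l, SN mult_step l.
Proof.
move=> HS.
have SN_cons b : SN e b -> forall l, SN mult_step l -> SN mult_step (b :: l).
  elim=> {}b _ IHb l; elim=> {}l Hl IHl.
  constructor=> l' [[|a l1] [b' [l2 [C [/= [Eb El] [-> HC]]]]]]; last first.
    by rewrite -Eb; apply: IHl; exists l1, b', l2, C; rewrite El.
  rewrite -El; rewrite -Eb in HC; elim: C HC => [|c C IHC] HC /=; first by constructor=> y /Hl.
  by apply: IHb; [apply: HC; left|apply: IHC => x Hx; apply: HC; right].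
elim=> [|a l IH]; last exact: SN_cons.
by constructor=> y [[|? ?] [b [l2 [C []]]]].
Qed.

End MultisetExtension.

Definition free_ext (A : Type) (G : semigroup) (h : A -> G) (w : word A) : G :=
  foldl (fun acc z => sg_op acc (h z)) (h w.1) w.2.

Lemma free_ext_hom (A : Type) (G : semigroup) (h : A -> G) :
  @sg_hom (free_sg A) G (free_ext h).
Proof.
have foldl_op x y s : foldl (fun acc z => sg_op acc (h z)) (sg_op x y) s =
    sg_op x (foldl (fun acc z => sg_op acc (h z)) y s).
  by elim: s x y => //= a s IH x y; rewrite -sg_assoc IH.
by move=> a b; rewrite /free_ext /wcat /wd /= foldl_cat /= foldl_op.
Qed.

Lemma hom_free_ext (A : Type) (G : semigroup) (k : free_sg A -> G) :
  sg_hom k -> forall w, k w = free_ext (fun a => k (a, [::])) w.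
Proof.
move=> Hk [z s]; elim/last_ind: s => [|s a IH] //.
have -> : (z, rcons s a) = wcat (z, s) (a, [::]) by rewrite /wcat /= cats1.
by rewrite Hk free_ext_hom -IH.
Qed.

Definition wmap (A B : Type) (F : A -> B) (w : word A) : word B := (F w.1, map F w.2).

Lemma wd_wmap (A B : Type) (F : A -> B) w : wd (wmap F w) = map F (wd w).
Proof. by []. Qed.

Lemma free_ext_wmap (A B : Type) (G : semigroup) (h : B -> G) (F : A -> B) w :
  free_ext h (wmap F w) = free_ext (h \o F) w.
Proof. by case: w => z s; rewrite /free_ext /=; elim: s (h (F z)) => //= a s IH x. Qed.

Lemma irreducible_wmap (A B : Type) (F : A -> B) (R : rules A) (R' : rules B) w :
  (forall l r, List.In (l, r) R -> exists r', List.In (wmap F l, r') R') ->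
  irreducible R' (wmap F w) -> irreducible R w.
Proof.
move=> HR Hw w' [w1 [w2 [l [r [Hlr [Ew _]]]]]]; have [r' Hr'] := HR _ _ Hlr.
by apply: (not_irreducible_factor (w1 := map F w1) (w2 := map F w2) Hr') Hw; rewrite wd_wmap Ew !map_cat.
Qed.

Section Blocks.
Variables X Y : Type.
Implicit Types (w : seq (X + Y)) (p : seq Y).

(* [pieces w] lists the maximal [Y]-segments of [w] in order, including the empty
   ones before, between and after the [X] letters; [blocks w] keeps the nonempty ones. *)
Fixpoint pieces w : seq (seq Y) :=
  match w with
  | [::] => [:: [::]]
  | inl _ :: w' => [::] :: pieces w'
  | inr y :: w' => if pieces w' is p :: ps then (y :: p) :: ps else [::]
  end.

Definition nonnil p : bool := 0 < size p.
Definition blocks w := filter nonnil (pieces w).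
Definition lefts w : seq X := pmap (fun z => if z is inl x then Some x else None) w.

Lemma pieces_cons w : exists p ps, pieces w = p :: ps.
Proof.
elim: w => [|[x|y] w [p [ps IH]]] /=; first by exists [::], [::].
  by exists [::], (pieces w).
by rewrite IH; exists (y :: p), ps.
Qed.

Lemma pieces_rcons w : exists ps p, pieces w = rcons ps p.
Proof.
have [p [ps E]] := pieces_cons w; rewrite E.
case/lastP: ps E => [|ps q] E; first by exists [::], p.
by exists (p :: ps), q; rewrite rcons_cons.
Qed.

Lemma pieces_cat a b ps p q qs : pieces a = rcons ps p -> pieces b = q :: qs ->
  pieces (a ++ b) = ps ++ (p ++ q) :: qs.
Proof.
move=> + Hb; elim: a ps p => [|[x|y] a IH] ps p /=.
- by case: ps => [|? []] //= [<-].
- have [ps' [p' E]] := pieces_rcons a; rewrite E.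
  case: ps => [|r ps] /=; first by case: ps' {E}.
  by case=> <- E2; case: (rcons_inj E2) => <- <-; rewrite (IH ps' p' E).
- have [ps' [p' E]] := pieces_rcons a; rewrite E (IH _ _ E).
  case: ps' E => [|r ps'] E /=; first by case: ps => [|? []] //= [<-].
  by rewrite -rcons_cons => /rcons_inj [<- <-].
Qed.

Lemma pieces_inl u w : pieces (map inl u ++ w) = nseq (size u) [::] ++ pieces w.
Proof. by elim: u => //= x u ->. Qed.

Lemma pieces_inr u w q qs : pieces w = q :: qs -> pieces (map inr u ++ w) = (u ++ q) :: qs.
Proof. by move=> E; elim: u => //= y u ->. Qed.

Lemma lefts_cat a b : lefts (a ++ b) = lefts a ++ lefts b.
Proof. exact: pmap_cat. Qed.

Lemma lefts_inl u : lefts (map inl u) = u.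
Proof. by elim: u => //= x u ->. Qed.

Lemma filter_nonnil2 p q : filter nonnil [:: p; q] = filter nonnil [:: p] ++ filter nonnil [:: q].
Proof. by rewrite -cat1s filter_cat. Qed.

Lemma In_filter_nonnil1 c p : List.In c (filter nonnil [:: p]) -> c = p.
Proof. by rewrite /=; case: (nonnil p) => //= [[]]. Qed.

Section Context.
Variables (w1 w2 : seq (X + Y)) (A B : seq (seq Y)) (L H : seq Y).
Hypotheses (Hw1 : pieces w1 = rcons A L) (Hw2 : pieces w2 = H :: B).

Lemma blocks_inl x s : blocks (w1 ++ map inl (x :: s) ++ w2) =
  filter nonnil A ++ filter nonnil [:: L; H] ++ filter nonnil B.
Proof.
rewrite /blocks (pieces_cat (b := map inl (x :: s) ++ w2) Hw1 (q := [::])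
  (qs := nseq (size s) [::] ++ H :: B)); last by rewrite /= pieces_inl Hw2.
rewrite cats0 !filter_cat; congr (_ ++ _) => /=; rewrite filter_cat.
have Enseq n : filter nonnil (nseq n [::]) = [::] by elim: n.
rewrite Enseq /=; by case: (nonnil L); case: (nonnil H).
Qed.

Lemma blocks_inr u : blocks (w1 ++ map inr u ++ w2) =
  filter nonnil A ++ filter nonnil [:: L ++ u ++ H] ++ filter nonnil B.
Proof.
rewrite /blocks (pieces_cat Hw1 (pieces_inr u Hw2)).
by rewrite !filter_cat; congr (_ ++ _); rewrite -cat1s filter_cat.
Qed.

Lemma blocks_xy x y : blocks (w1 ++ [:: inl x; inr y] ++ w2) =
  filter nonnil A ++ filter nonnil [:: L] ++ [:: y :: H] ++ filter nonnil B.
Proof.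
rewrite /blocks (pieces_cat (b := [:: inl x; inr y] ++ w2) Hw1 (q := [::]) (qs := (y :: H) :: B)).
  by rewrite cats0 !filter_cat; congr (_ ++ _); rewrite /= /nonnil /=; case: (0 < size L).
have -> : pieces ([:: inl x; inr y] ++ w2) = [::] :: pieces (map inr [:: y] ++ w2) by [].
by rewrite (pieces_inr _ Hw2).
Qed.

Lemma blocks_yx x y : blocks (w1 ++ [:: inr y; inl x] ++ w2) =
  filter nonnil A ++ [:: L ++ [:: y]] ++ filter nonnil [:: H] ++ filter nonnil B.
Proof.
rewrite /blocks (pieces_cat (b := [:: inr y; inl x] ++ w2) Hw1 (q := [:: y]) (qs := H :: B)).
  rewrite !filter_cat; congr (_ ++ _); rewrite /= {1}/nonnil size_cat addnS /=.
  by case: (nonnil H).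
change (pieces (map inr [:: y] ++ (inl x :: w2)) = [:: [:: y], H & B]).
by rewrite (pieces_inr [:: y] (w := inl x :: w2) (q := [::]) (qs := pieces w2)) // Hw2.
Qed.

End Context.

Lemma blocks_inl_word w1 w2 (u v : word X) :
  blocks (w1 ++ map inl (wd u) ++ w2) = blocks (w1 ++ map inl (wd v) ++ w2).
Proof.
have [A [L Hw1]] := pieces_rcons w1; have [H [B Hw2]] := pieces_cons w2.
by case: u => ? ?; case: v => ? ?; rewrite !(blocks_inl Hw1 Hw2).
Qed.

Lemma lefts_seq_step (R : rules X) w1 w2 (u v : word X) : List.In (u, v) R ->
  seq_step R (lefts (w1 ++ map inl (wd u) ++ w2)) (lefts (w1 ++ map inl (wd v) ++ w2)).
Proof. by move=> Huv; rewrite !lefts_cat !lefts_inl; apply/seq_step_ctx/seq_step_rule. Qed.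

Section BlockDescent.
Variable R : rules Y.
Local Notation block_descent := (mult_step (step_or_subfactor R)).

Lemma block_descent_inr w1 w2 (u v : word Y) : List.In (u, v) R ->
  block_descent (blocks (w1 ++ map inr (wd u) ++ w2)) (blocks (w1 ++ map inr (wd v) ++ w2)).
Proof.
move=> Huv; have [A [L Hw1]] := pieces_rcons w1; have [H [B Hw2]] := pieces_cons w2.
rewrite !(blocks_inr Hw1 Hw2).
exists (filter nonnil A), (L ++ wd u ++ H), (filter nonnil B), (filter nonnil [:: L ++ wd v ++ H]).
have nonnil_u : nonnil (L ++ wd u ++ H) by rewrite /nonnil !size_cat /=; lia.
split; first by rewrite /= nonnil_u.
split=> [//|c /In_filter_nonnil1 ->]; left; exact/seq_step_ctx/seq_step_rule.
Qed.

Lemma block_descent_inr_inl w1 w2 (u : word Y) (s : word X) :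
  block_descent (blocks (w1 ++ map inr (wd u) ++ w2)) (blocks (w1 ++ map inl (wd s) ++ w2)).
Proof.
have [A [L Hw1]] := pieces_rcons w1; have [H [B Hw2]] := pieces_cons w2.
case: s => x s; rewrite (blocks_inr Hw1 Hw2) (blocks_inl Hw1 Hw2).
exists (filter nonnil A), (L ++ wd u ++ H), (filter nonnil B), (filter nonnil [:: L; H]).
have nonnil_u : nonnil (L ++ wd u ++ H) by rewrite /nonnil !size_cat /=; lia.
split; first by rewrite /= nonnil_u.
split=> [//|c]; rewrite filter_nonnil2 List.in_app_iff.
case=> /In_filter_nonnil1 ->; right; first by exists [::], (wd u ++ H); rewrite size_cat.
by exists (L ++ wd u), [::]; rewrite cats0 -catA; split=> //; rewrite !size_cat /=; lia.
Qed.

Lemma block_descent_xy w1 w2 x y (s : word X) :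
  block_descent (blocks (w1 ++ [:: inl x; inr y] ++ w2)) (blocks (w1 ++ map inl (wd s) ++ w2)).
Proof.
have [A [L Hw1]] := pieces_rcons w1; have [H [B Hw2]] := pieces_cons w2.
case: s => x' s; rewrite (blocks_xy Hw1 Hw2) (blocks_inl Hw1 Hw2).
exists (filter nonnil A ++ filter nonnil [:: L]), (y :: H), (filter nonnil B), (filter nonnil [:: H]).
split; first by rewrite -!catA.
split; first by rewrite filter_nonnil2 -!catA.
by move=> c /In_filter_nonnil1 ->; right; exists [:: y], [::]; rewrite cats0.
Qed.

Lemma block_descent_yx w1 w2 x y (s : word X) :
  block_descent (blocks (w1 ++ [:: inr y; inl x] ++ w2)) (blocks (w1 ++ map inl (wd s) ++ w2)).
Proof.
have [A [L Hw1]] := pieces_rcons w1; have [H [B Hw2]] := pieces_cons w2.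
case: s => x' s; rewrite (blocks_yx Hw1 Hw2) (blocks_inl Hw1 Hw2).
exists (filter nonnil A), (L ++ [:: y]), (filter nonnil [:: H] ++ filter nonnil B), (filter nonnil [:: L]).
split=> //; split; first by rewrite filter_nonnil2 -!catA.
by move=> c /In_filter_nonnil1 ->; right; exists [::], [:: y].
Qed.

End BlockDescent.

Lemma letters_shape w : (exists u, w = map inl u) \/ (exists u, w = map inr u) \/
  exists w1 w2 x y, w = w1 ++ [:: inl x; inr y] ++ w2 \/ w = w1 ++ [:: inr y; inl x] ++ w2.
Proof.
elim: w => [|z w [[u ->]|[[u ->]|[w1 [w2 [x [y [->|->]]]]]]]]; first by left; exists [::].
- case: z => [x|y]; first by left; exists (x :: u).
  case: u => [|x u]; first by right; left; exists [:: y].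
  by right; right; exists [::], (map inl u), x, y; right.
- case: z => [x|y]; last by right; left; exists (y :: u).
  case: u => [|y u]; first by left; exists [:: x].
  by right; right; exists [::], (map inr u), x, y; left.
- by right; right; exists (z :: w1), w2, x, y; left.
- by right; right; exists (z :: w1), w2, x, y; right.
Qed.

End Blocks.

Section IdealExtension.
Variables (S T U : semigroup) (I : S -> Prop).
Hypothesis I_ideal : is_ideal I.
Variable g : T -> S.
Hypotheses (g_hom : sg_hom g) (g_inj : injective g)
  (g_img : forall s, I s <-> exists t, g t = s).
Variable f : S -> U.
Hypotheses (f_hom : sg_hom f) (f_surj : forall u, exists s, f s = u)
  (f_ker : forall s s', f s = f s' <-> rees_cong I s s').
Variables (X : finType) (RT : rules X) (psi : free_sg X -> T).
Hypotheses (RT_complete : complete RT) (psi_hom : sg_hom psi)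
  (psi_surj : forall t, exists w, psi w = t)
  (psi_ker : forall w w', psi w = psi w' <-> gen_cong RT w w').
Variables (Y : finType) (RU : rules Y) (phi : free_sg Y -> U).
Hypotheses (RU_complete : complete RU) (phi_hom : sg_hom phi)
  (phi_surj : forall u, exists w, phi w = u)
  (phi_ker : forall w w', phi w = phi w' <-> gen_cong RU w w').

Local Notation Z := (X + Y)%type.

Definition lift (u : U) : S := sval (constructive_indefinite_description _ (f_surj u)).

Lemma liftK u : f (lift u) = u.
Proof. exact: svalP (constructive_indefinite_description _ (f_surj u)). Qed.

Definition gen_val (z : Z) : S :=
  match z with inl x => g (psi (x, [::])) | inr y => lift (phi (y, [::])) end.

Definition eval : free_sg Z -> S := free_ext gen_val.

Lemma eval_inl w : eval (wmap inl w) = g (psi w).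
Proof.
have gpsi_hom : @sg_hom (free_sg X) S (g \o psi) by move=> a b; rewrite /= psi_hom g_hom.
by rewrite /eval free_ext_wmap -[RHS]/((g \o psi) w) (hom_free_ext gpsi_hom w).
Qed.

Lemma eval_inr w : f (eval (wmap inr w)) = phi w.
Proof.
have f_eval_hom : @sg_hom (free_sg Y) U (f \o free_ext (gen_val \o inr)).
  by move=> a b; rewrite /= free_ext_hom f_hom.
rewrite /eval free_ext_wmap -[LHS]/((f \o free_ext (gen_val \o inr)) w).
rewrite (hom_free_ext f_eval_hom w) (hom_free_ext phi_hom w).
by congr free_ext; apply: functional_extensionality => y; rewrite /= liftK.
Qed.

Lemma ideal_eval_inl w : I (eval (wmap inl w)).
Proof. by rewrite eval_inl; apply/g_img; exists (psi w). Qed.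

Lemma eval_inr_gen_cong u v : gen_cong RU u v ->
  eval (wmap inr u) = eval (wmap inr v) \/ I (eval (wmap inr u)) /\ I (eval (wmap inr v)).
Proof. by move/phi_ker; rewrite -!eval_inr => /f_ker. Qed.

Lemma ideal_word_ex s : exists w : word X, I s -> g (psi w) = s.
Proof.
case: (classic (I s)) => [/g_img [t <-]|NIs]; first by have [w <-] := psi_surj t; exists w.
by have [_ /g_img [t _]] := I_ideal.1; have [w _] := psi_surj t; exists w.
Qed.

Definition ideal_rep (s : S) : word Z :=
  wmap inl (sval (constructive_indefinite_description _ (ideal_word_ex s))).

Lemma eval_ideal_rep s : I s -> eval (ideal_rep s) = s.
Proof. by move=> Is; rewrite eval_inl (svalP (constructive_indefinite_description _ (ideal_word_ex s))). Qed.

Definition rules_T : rules Z := [seq (wmap inl r.1, wmap inl r.2) | r <- RT].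

Definition rule_U (r : word Y * word Y) : word Z * word Z :=
  if excluded_middle_informative (I (eval (wmap inr r.1)))
  then (wmap inr r.1, ideal_rep (eval (wmap inr r.1)))
  else (wmap inr r.1, wmap inr r.2).

(* The [RU]-irreducible words evaluating into [I] all represent the zero of [U], so
   there is at most one of them ([irreducible_zero_unique]). *)
Definition rules_zero : rules Z :=
  if excluded_middle_informative (exists z, irreducible RU z /\ I (eval (wmap inr z)))
  is left H then
    let z := sval (constructive_indefinite_description _ H) in
    [:: (wmap inr z, ideal_rep (eval (wmap inr z)))]
  else [::].

Definition rules_mixed (x : X) (y : Y) : rules Z :=
  [:: ((inl x, [:: inr y]), ideal_rep (sg_op (gen_val (inl x)) (gen_val (inr y))));
      ((inr y, [:: inl x]), ideal_rep (sg_op (gen_val (inr y)) (gen_val (inl x))))].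

Definition rules_S : rules Z :=
  rules_T ++ map rule_U RU ++ rules_zero ++ flatten [seq rules_mixed x y | x <- enum X, y <- enum Y].

Lemma In_rules_mixed x y r : List.In r (rules_mixed x y) -> List.In r rules_S.
Proof.
move=> Hr; rewrite /rules_S !List.in_app_iff; right; right; right.
apply/List.in_concat; exists (rules_mixed x y); split=> //.
apply/List.in_concat; exists [seq rules_mixed x y | y <- enum Y]; split.
  by apply/List.in_map_iff; exists x; split=> //; apply: In_mem; rewrite mem_enum.
by apply/List.in_map_iff; exists y; split=> //; apply: In_mem; rewrite mem_enum.
Qed.

Lemma rules_S_sound l r : List.In (l, r) rules_S -> eval l = eval r.
Proof.
have Igen x : I (gen_val (inl x)) by apply/g_img; exists (psi (x, [::])).
rewrite /rules_S !List.in_app_iff; move=> [|[|[]]].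
- case/List.in_map_iff=> [[u v] [[<- <-] Huv]].
  by rewrite !eval_inl; congr g; apply/psi_ker; apply: gen_cong_rule.
- case/List.in_map_iff=> [[u v] []]; rewrite /rule_U /=.
  case: excluded_middle_informative => Iu [<- <-] Huv; first by rewrite eval_ideal_rep.
  by case: (eval_inr_gen_cong (gen_cong_rule Huv)) => [|[]].
- rewrite /rules_zero; case: excluded_middle_informative => // H [] // [<- <-].
  by rewrite eval_ideal_rep //; case: (svalP (constructive_indefinite_description _ H)).
- case/List.in_concat=> rs [/List.in_concat [_ [/List.in_map_iff [x [<- _]]]]].
  case/List.in_map_iff=> y [<- _] [|[]] // [<- <-]; rewrite eval_ideal_rep //.
    exact: (I_ideal.2 _ _ (Igen x)).2.
  exact: (I_ideal.2 _ _ (Igen x)).1.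
Qed.

Lemma rule_shape l r : List.In (l, r) rules_S ->
  (exists u v, List.In (u, v) RT /\ l = wmap inl u /\ r = wmap inl v) \/
  (exists u v, List.In (u, v) RU /\ l = wmap inr u /\ r = wmap inr v) \/
  (exists s, r = wmap inl s /\ ((exists u, l = wmap inr u) \/
     (exists x y, l = (inl x, [:: inr y])) \/ (exists x y, l = (inr y, [:: inl x])))).
Proof.
rewrite /rules_S !List.in_app_iff; move=> [|[|[]]].
- by case/List.in_map_iff=> [[u v] [[<- <-] Huv]]; left; exists u, v.
- case/List.in_map_iff=> [[u v] []]; rewrite /rule_U /=.
  case: excluded_middle_informative => _ [<- <-] Huv; last by right; left; exists u, v.
  by right; right; eexists; split; [reflexivity|left; exists u].
- rewrite /rules_zero; case: excluded_middle_informative => // H [] // [<- <-].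
  by right; right; eexists; split; [reflexivity|left; eexists].
- case/List.in_concat=> rs [/List.in_concat [_ [/List.in_map_iff [x [<- _]]]]].
  case/List.in_map_iff=> y [<- _] [|[]] // [<- <-]; right; right; eexists; split; try reflexivity.
    by right; left; exists x, y.
  by right; right; exists x, y.
Qed.

Lemma step_measure a b : step rules_S a b ->
  mult_step (step_or_subfactor RU) (blocks (wd a)) (blocks (wd b)) \/
  blocks (wd a) = blocks (wd b) /\ seq_step RT (lefts (wd a)) (lefts (wd b)).
Proof.
case=> w1 [w2 [l [r [Hlr [-> ->]]]]].
case: (rule_shape Hlr) => [[u [v [Huv [-> ->]]]]|[[u [v [Huv [-> ->]]]]|[s [-> Hl]]]].
- by right; rewrite !wd_wmap; split; [apply: blocks_inl_word|apply: lefts_seq_step].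
- by left; rewrite !wd_wmap; apply: block_descent_inr.
left; rewrite wd_wmap; case: Hl => [[u ->]|[[x [y ->]]|[x [y ->]]]].
- by rewrite wd_wmap; apply: block_descent_inr_inl.
- exact: block_descent_xy.
- exact: block_descent_yx.
Qed.

Lemma rules_S_SN w : SN (step rules_S) w.
Proof.
have SN_T := SN_seq_step (noetherian_SN RT_complete.1).
have SN_blocks := SN_mult_step (SN_step_or_subfactor (SN_seq_step (noetherian_SN RU_complete.1))).
suff H M : SN (mult_step (step_or_subfactor RU)) M ->
    forall w, blocks (wd w) = M -> SN (step rules_S) w.
  exact: H _ (SN_blocks _) w erefl.
elim=> {}M _ IHM.
suff H P : SN (seq_step RT) P ->
    forall w, blocks (wd w) = M -> lefts (wd w) = P -> SN (step rules_S) w.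
  by move=> w' Ew'; apply: H _ (SN_T _) w' Ew' erefl.
elim=> {}P _ IHP w' EM EP; constructor=> w'' Hstep.
case: (step_measure Hstep) => [Hdesc|[Eb Hl]].
  by apply: (IHM (blocks (wd w''))) => //; rewrite -EM.
by apply: (IHP (lefts (wd w''))) => //; rewrite -?EP -?EM.
Qed.

Lemma irreducible_zero_unique z z' : irreducible RU z -> irreducible RU z' ->
  I (eval (wmap inr z)) -> I (eval (wmap inr z')) -> z = z'.
Proof.
move=> Hz Hz' Iz Iz'; apply: confluent_irreducible_eq RU_complete.2 _ Hz Hz'.
by apply/phi_ker; rewrite -!eval_inr; apply/f_ker; right.
Qed.

Lemma In_rules_zero z : irreducible RU z -> I (eval (wmap inr z)) ->
  List.In (wmap inr z, ideal_rep (eval (wmap inr z))) rules_S.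
Proof.
move=> Hz Iz; rewrite /rules_S !List.in_app_iff; right; right; left.
rewrite /rules_zero; case: excluded_middle_informative => [H|[]]; last by exists z.
case: (svalP (constructive_indefinite_description _ H)) => Hz' Iz'.
by rewrite (irreducible_zero_unique Hz' Hz Iz' Iz); left.
Qed.

Lemma irreducible_shape n : irreducible rules_S n ->
  (exists a, n = wmap inl a /\ irreducible RT a) \/
  (exists b, n = wmap inr b /\ irreducible RU b /\ ~ I (eval n)).
Proof.
move=> Hn; case: (letters_shape (wd n)) => [[u Eu]|[[u Eu]|[w1 [w2 [x [y [E|E]]]]]]].
- case: u Eu => [|x u] Eu; first by case: n {Hn} Eu.
  have En : n = wmap inl (x, u) by apply: wd_inj.
  left; exists (x, u); split=> //; apply: (irreducible_wmap (F := inl) (R' := rules_S)); last by rewrite -En.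
  move=> l r Hlr; exists (wmap inl r); rewrite /rules_S List.in_app_iff; left.
  by apply/List.in_map_iff; exists (l, r).
- case: u Eu => [|y u] Eu; first by case: n {Hn} Eu.
  have En : n = wmap inr (y, u) by apply: wd_inj.
  have Hu : irreducible RU (y, u).
    apply: (irreducible_wmap (F := inr) (R' := rules_S)); last by rewrite -En.
    move=> l r Hlr; exists (rule_U (l, r)).2.
    rewrite /rules_S !List.in_app_iff; right; left; apply/List.in_map_iff; exists (l, r).
    by rewrite /rule_U; case: excluded_middle_informative.
  right; exists (y, u); do 2!split=> //; rewrite En => In.
  by apply: (not_irreducible_factor (w1 := [::]) (w2 := [::]) (In_rules_zero Hu In) _ Hn); rewrite En cats0.
- by case: (not_irreducible_factor (In_rules_mixed (or_introl erefl)) E Hn).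
- by case: (not_irreducible_factor (In_rules_mixed (or_intror (or_introl erefl))) E Hn).
Qed.

Lemma eval_inj_irreducible n n' : irreducible rules_S n -> irreducible rules_S n' ->
  eval n = eval n' -> n = n'.
Proof.
move=> /irreducible_shape [[a [-> Ha]]|[b [-> [Hb NIb]]]];
  move=> /irreducible_shape [[a' [-> Ha']]|[b' [-> [Hb' NIb']]]] E.
- move: E; rewrite !eval_inl => /g_inj /psi_ker Eaa'.
  by rewrite (confluent_irreducible_eq RT_complete.2 Eaa' Ha Ha').
- by case: NIb'; rewrite -E; apply: ideal_eval_inl.
- by case: NIb; rewrite E; apply: ideal_eval_inl.
- have /phi_ker Ebb' : phi b = phi b' by rewrite -!eval_inr E.
  by rewrite (confluent_irreducible_eq RU_complete.2 Ebb' Hb Hb').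
Qed.

Lemma eval_surj s : exists w, eval w = s.
Proof.
case: (classic (I s)) => Is; first by exists (ideal_rep s); apply: eval_ideal_rep.
have [w Ew] := phi_surj (f s); exists (wmap inr w).
by have /f_ker [|[]] : f (eval (wmap inr w)) = f s by rewrite eval_inr.
Qed.

Lemma ideal_extension_fcrs : fcrs_defined S.
Proof.
exists Z, rules_S; apply: (complete_defines (e := eval)).
- exact: free_ext_hom.
- exact: eval_surj.
- exact: rules_S_sound.
- exact: rules_S_SN.
- exact: eval_inj_irreducible.
Qed.

End IdealExtension.

Theorem theorem1p2 (S T U : semigroup) :
  ideal_extension S T U -> fcrs_defined T -> fcrs_defined U -> fcrs_defined S.
Proof.
move=> [I [I_ideal [[g [g_hom [g_inj g_img]]] [f [f_hom [f_surj f_ker]]]]]].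
move=> [X [RT [RT_complete [psi [psi_hom [psi_surj psi_ker]]]]]].
move=> [Y [RU [RU_complete [phi [phi_hom [phi_surj phi_ker]]]]]].
exact: (ideal_extension_fcrs I_ideal g_hom g_inj g_img f_hom f_surj f_ker
  RT_complete psi_hom psi_surj psi_ker RU_complete phi_hom phi_surj phi_ker).
Qed.
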